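(* Let $Q>0$ and $\Gamma>0$. Let $f$ be a nonnegative random variable with a continuous probability density function, and let $I$ be a nonnegative random variable independent of $f$ with $\mathbb{E}[I]=\Gamma$. Define $$C^{{\rm ER},a}_{\rm PR,CP}=\mathbb{E}\left[\log\left(1+\frac{fQ}{1+I}\right)\right],\qquad C^{{\rm ER},p}_{\rm PR,CP}=\mathbb{E}\left[\log\left(1+\frac{fQ}{1+\Gamma}\right)\right].$$ Then $C^{{\rm ER},a}_{\rm PR,CP}\geq C^{{\rm ER},p}_{\rm PR,CP}$.
   Context: Setting: a primary radio (PR) fading link with channel power gain $f$ and unit-power Gaussian noise, sharing spectrum with a cognitive radio (CR) whose interference power at the PR receiver is $I$. The CR is independent of $f$; $I$ is, e.g., $I=gp$ where $g$ is the CR-to-PR channel power gain and $p$ is the CR transmit power, which depends only on CR-side channel gains independent of $f$. Under the average-interference-power (AIP) constraint with threshold $\Gamma$, the interference is random with $\mathbb{E}[I]=\Gamma$. Under the peak-interference-power (PIP) constraint with threshold $\Gamma$, the interference equals $\Gamma$ in every fading state. The PR uses the constant-power (CP) policy: it transmits with power $Q$ in every fading state, treating interference as Gaussian noise. $C^{{\rm ER},a}_{\rm PR,CP}$ and $C^{{\rm ER},p}_{\rm PR,CP}$ are the resulting PR ergodic capacities in the AIP and PIP cases. *)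

From HB Require Import structures.
From mathcomp Require Import all_boot all_order all_algebra.
From mathcomp Require Import all_classical all_reals all_analysis.
Set Implicit Arguments. Unset Strict Implicit. Unset Printing Implicit Defensive.
Import Order.TTheory GRing.Theory Num.Theory.
Import numFieldNormedType.Exports.
Local Open Scope classical_set_scope.
Local Open Scope ring_scope.
Local Open Scope ereal_scope.

Definition indep_rv {d} {T : measurableType d} {R : realType}
  (P : probability T R) (X Y : {RV P >-> R}) : Prop :=
  forall A B : set R, measurable A -> measurable B ->
    P (X @^-1` A `&` Y @^-1` B) = P (X @^-1` A) * P (Y @^-1` B).

Definition has_continuous_pdf {d} {T : measurableType d} {R : realType}
  (P : probability T R) (X : {RV P >-> R}) : Prop :=
  exists g : R -> R, continuous g /\ (forall x, (0 <= g x)%R) /\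
    forall A : set R, measurable A ->
      P (X @^-1` A) = (\int[lebesgue_measure]_(x in A) (g x)%:E).

From HB Require Import structures.
From mathcomp Require Import all_boot all_order all_algebra.
From mathcomp Require Import all_classical all_reals all_analysis.
From mathcomp Require Import measurable_realfun.
From mathcomp Require Import ring lra.
Import Order.TTheory GRing.Theory Num.Theory.
Import numFieldNormedType.Exports.
Local Open Scope classical_set_scope.
Local Open Scope ring_scope.

(* For fixed a >= 0 the map i |-> ln (1 + a / (1 + i)) is convex, so it lies
   above its tangent at i = Gamma.  With a = f Q, the tangent's slope is a
   function of f alone; as I is independent of f with mean Gamma, the
   expectation of the linear correction term vanishes, which leaves the
   inequality. *)

Section rate.
Context {R : realType}.

Definition rate (a i : R) := ln (1 + a / (1 + i)).

(* [rate_slope a g] is minus the derivative of [rate a] at [g]. *)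
Definition rate_slope (a g : R) := (1 + g)^-1 - (1 + g + a)^-1.

Lemma rate_tangent (a i g : R) : 0 <= a -> -1 < i -> -1 < g ->
  rate a g + rate_slope a g * g <= rate a i + rate_slope a g * i.
Proof.
move=> a0 i1 g1; rewrite /rate /rate_slope.
set u := 1 + i; set v := 1 + g.
have u0 : 0 < u by rewrite /u; lra.
have v0 : 0 < v by rewrite /v; lra.
have uv0 : 0 < u + a by lra.
have va0 : 0 < v + a by lra.
have -> : 1 + a / u = (u + a) / u by field; lra.
have -> : 1 + a / v = (v + a) / v by field; lra.
(* [ln x <= x - 1] at the ratio of the two arguments; the remaining gap is a square *)
have ln_ratio : ln ((v + a) / v) - ln ((u + a) / u) <= a * (u - v) / (v * (u + a)).
  rewrite -ln_div ?posrE ?divr_gt0 //.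
  have -> : a * (u - v) / (v * (u + a)) = (v + a) / v / ((u + a) / u) - 1 by field; lra.
  have := @le_ln1Dx R ((v + a) / v / ((u + a) / u) - 1); rewrite [1 + _]addrC subrK; apply.
  have : 0 < (v + a) / v / ((u + a) / u) by rewrite !divr_gt0.
  lra.
have -> : v^-1 - (v + a)^-1 = a / (v * (v + a)) by field; lra.
suff : a * (u - v) / (v * (u + a)) <= a / (v * (v + a)) * (i - g) by lra.
have -> : i - g = u - v by rewrite /u /v; ring.
rewrite -subr_ge0.
have -> : a / (v * (v + a)) * (u - v) - a * (u - v) / (v * (u + a)) =
          a * (u - v) ^+ 2 / (v * (u + a) * (v + a)) by field; lra.
apply: divr_ge0; first by rewrite mulr_ge0 ?sqr_ge0.
by rewrite !mulr_ge0 // ltW.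
Qed.

Lemma rate_ge0 (a i : R) : 0 <= a -> -1 < i -> 0 <= rate a i.
Proof. by move=> a0 i1; rewrite /rate ln_ge0 // lerDl divr_ge0 //; lra. Qed.

Lemma rate_slope_bounds (a g : R) : 0 <= a -> -1 < g ->
  0 <= rate_slope a g <= (1 + g)^-1.
Proof.
move=> a0 g1; rewrite /rate_slope subr_ge0 lerBlDr lerDl invr_ge0.
rewrite lef_pV2 ?posrE; lra.
Qed.

Lemma measurable_inv_addr_norm {k : R} : 0 < k ->
  measurable_fun setT (fun x : R => (k + `|x|)^-1).
Proof.
move=> k0; apply: continuous_measurable_fun => x.
have nz : k + `|x| != 0 by rewrite gt_eqF // ltr_pwDl.
apply: (@continuousV R R (fun y => k + `|y|) x nz).
apply: (@continuousD R R^o R (fun _ => k) (fun y => `|y|)); first exact: cst_continuous.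
exact: (@norm_continuous _ R^o).
Qed.

Lemma measurable_rate {d} {T : measurableType d} {a i : T -> R} :
  measurable_fun setT a -> measurable_fun setT i -> (forall w, 0 <= i w) ->
  measurable_fun setT (fun w => rate (a w) (i w)).
Proof.
move=> ma mi i0.
(* unlike [(1 + y)^-1], the map [(1 + `|y|)^-1] is continuous on all of R *)
have -> : (fun w => rate (a w) (i w)) = (fun w => ln (1 + a w * (1 + `|i w|)^-1)).
  by apply/funext => w; rewrite ger0_norm.
apply: measurableT_comp; first exact: measurable_ln.
apply: measurable_funD; first exact: measurable_cst.
apply: measurable_funM => //.
exact: measurableT_comp (measurable_inv_addr_norm ltr01) mi.
Qed.

Lemma measurable_rate_slope_norm {g : R} : -1 < g ->
  measurable_fun setT (fun a : R => rate_slope `|a| g).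
Proof.
move=> g1; apply: measurable_funB; first exact: measurable_cst.
by apply: measurable_inv_addr_norm; lra.
Qed.

End rate.

Section independent_expectation.
Context {d : measure_display} {T : measurableType d} {R : realType}.
Variable P : probability T R.

Lemma ge0_integral_indep_mul {X Y : {RV P >-> R}} {phi psi : R -> R} :
  indep_rv X Y -> measurable_fun setT phi -> measurable_fun setT psi ->
  (forall x, 0 <= phi x) -> (forall y, 0 <= psi y) ->
  (\int[P]_w (phi (X w) * psi (Y w))%:E =
    \int[P]_w (phi (X w))%:E * \int[P]_w (psi (Y w))%:E)%E.
Proof.
move=> XY mphi mpsi phi0 psi0.
pose XYm : {mfun T >-> (R * R)%type} :=
  HB.pack (fun w => (X w, Y w)) (isMeasurableFun.Build _ _ _ _ _
    (measurable_fun_pair (measurable_funPT X) (measurable_funPT Y))).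
pose g := fun z : R * R => (phi z.1 * psi z.2)%:E.
have mg : measurable_fun [set: (R * R)%type] g.
  apply/measurable_EFinP; apply: measurable_funM.
  - exact: measurableT_comp mphi measurable_fst.
  - exact: measurableT_comp mpsi measurable_snd.
have g0 z : (0 <= g z)%E by rewrite lee_fin mulr_ge0.
have -> : (\int[P]_w (phi (X w) * psi (Y w))%:E = \int[distribution P XYm]_z g z)%E.
  by rewrite ge0_integral_distribution.
have -> : (\int[distribution P XYm]_z g z =
           \int[distribution P X \x distribution P Y]_z g z)%E.
  apply: eq_measure_integral => A mA _.
  (* independence identifies the joint law with the product law on rectangles *)
  apply/esym; apply: product_measure_unique; last exact: mA.
  move=> B C mB mC; exact: (XY B C mB mC).
rewrite fubini_tonelli1 // /fubini_F /g /=.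
have inner x : (\int[distribution P Y]_y (phi x * psi y)%:E =
                (phi x)%:E * \int[distribution P Y]_y (psi y)%:E)%E.
  under eq_integral do rewrite EFinM.
  by rewrite ge0_integralZl_EFin //; [move=> y _; rewrite lee_fin | exact/measurable_EFinP].
under eq_integral do rewrite inner.
rewrite ge0_integralZr //.
- by rewrite !ge0_integral_distribution //; exact/measurable_EFinP.
- exact/measurable_EFinP.
- by move=> x _; rewrite lee_fin.
- by apply: integral_ge0 => y _; rewrite lee_fin.
Qed.

Lemma ge0_le_integral_indep_tangent {X Y : {RV P >-> R}}
  {u v : T -> R} {c : R -> R} {g M : R} :
  measurable_fun setT u -> measurable_fun setT v -> measurable_fun setT c ->
  (forall w, 0 <= u w) -> (forall w, 0 <= v w) -> (forall x, 0 <= c x <= M) ->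
  (forall w, 0 <= Y w) -> indep_rv X Y -> (\int[P]_w (Y w)%:E = g%:E)%E ->
  (forall w, u w + c (X w) * g <= v w + c (X w) * Y w) ->
  (\int[P]_w (u w)%:E <= \int[P]_w (v w)%:E)%E.
Proof.
move=> mu mv mc u0 v0 c0M Y0 XY EY uv.
have g0 : 0 <= g by rewrite -lee_fin -EY; apply: integral_ge0 => w _; rewrite lee_fin.
have mcX : measurable_fun setT (fun w => c (X w)) := measurableT_comp mc (measurable_funPT X).
have cX0 w : 0 <= c (X w) by case/andP: (c0M (X w)).
have EcX_fin : (\int[P]_w (c (X w))%:E)%E \is a fin_num.
  rewrite ge0_fin_numE; last by apply: integral_ge0 => w _; rewrite lee_fin.
  apply: (le_lt_trans _ (ltry M)).
  rewrite -[M%:E]mule1 -(probability_setT P) -integral_cst //.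
  apply: ge0_le_integral => //.
  - by move=> w _; rewrite lee_fin.
  - exact/measurable_EFinP.
  - by move=> w _; rewrite lee_fin; case/andP: (c0M (X w)).
have EcXY : (\int[P]_w (c (X w) * Y w)%:E = \int[P]_w (c (X w))%:E * g%:E)%E.
  transitivity (\int[P]_w (c (X w) * `|Y w|)%:E)%E.
    by apply: eq_integral => w _; rewrite ger0_norm.
  rewrite (ge0_integral_indep_mul XY mc (@normr_measurable R setT)) //.
  - by congr (_ * _)%E; rewrite -EY; apply: eq_integral => w _; rewrite ger0_norm.
  - by move=> x; case/andP: (c0M x).
have EcXg : (\int[P]_w (c (X w) * g)%:E = \int[P]_w (c (X w))%:E * g%:E)%E.
  under eq_integral do rewrite EFinM.
  rewrite ge0_integralZr //; first exact/measurable_EFinP.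
  by move=> w _; rewrite lee_fin.
have muE : measurable_fun setT (fun w => (u w)%:E) by exact/measurable_EFinP.
have mvE : measurable_fun setT (fun w => (v w)%:E) by exact/measurable_EFinP.
have mcXgE : measurable_fun setT (fun w => (c (X w) * g)%:E).
  by apply/measurable_EFinP; exact: measurable_funM.
have mcXYE : measurable_fun setT (fun w => (c (X w) * Y w)%:E).
  by apply/measurable_EFinP; exact: measurable_funM.
rewrite -(@leeD2rE _ (\int[P]_w (c (X w))%:E * g%:E)%E) ?fin_numM //.
rewrite -{1}EcXg -EcXY -!ge0_integralD //; last 4 first.
- by move=> w _; rewrite lee_fin.
- by move=> w _; rewrite lee_fin mulr_ge0.
- by move=> w _; rewrite lee_fin.
- by move=> w _; rewrite lee_fin mulr_ge0.
apply: ge0_le_integral => //.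
- by move=> w _; rewrite -EFinD lee_fin addr_ge0 ?mulr_ge0.
- exact: emeasurable_funD.
- exact: emeasurable_funD.
- by move=> w _; rewrite -!EFinD lee_fin uv.
Qed.

End independent_expectation.


Theorem theorem4p1 (d : measure_display) (T : measurableType d) (R : realType)
  (P : probability T R) (f I : {RV P >-> R}) (Q Gamma : R) :
  0 < Q -> 0 < Gamma ->
  (forall w, 0 <= f w) -> (forall w, 0 <= I w) ->
  has_continuous_pdf f ->
  indep_rv f I ->
  (\int[P]_w (I w)%:E = Gamma%:E)%E ->
  (\int[P]_w (ln (1 + f w * Q / (1 + Gamma)))%:E
     <= \int[P]_w (ln (1 + f w * Q / (1 + I w)))%:E)%E.
Proof.
move=> Q0 G0 f0 I0 _ fI EI.
have G1 : -1 < Gamma by lra.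
have fQ0 w : 0 <= f w * Q by rewrite mulr_ge0 // ltW.
have mfQ : measurable_fun setT (fun w => f w * Q).
  exact: measurable_funM (measurable_funPT f) (measurable_cst Q).
(* the norm makes the slope nonnegative on all of R; it is inert on the range of f *)
apply: (ge0_le_integral_indep_tangent P (X := f) (Y := I)
          (c := fun x => rate_slope `|x * Q| Gamma) (g := Gamma)
          (M := (1 + Gamma)^-1)) => //.
- exact: measurable_rate mfQ (measurable_cst Gamma) (fun=> ltW G0).
- exact: measurable_rate mfQ (measurable_funPT I) I0.
- have mxQ : measurable_fun setT (fun x : R => x * Q).
    by apply: measurable_funM => //; exact: measurable_cst.
  exact: measurableT_comp (measurable_rate_slope_norm G1) mxQ.
- by move=> w; apply: rate_ge0 => //; lra.
- by move=> w; apply: rate_ge0 => //; have := I0 w; lra.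
- by move=> x; apply: rate_slope_bounds.
- by move=> w; rewrite ger0_norm //; apply: rate_tangent => //; have := I0 w; lra.
Qed.
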